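(* Let $H$ be a GCD-monoid. Let $a,c\in H$ and $b,d\in\mathrm{Sqf}\,H$ be such that $a$ and $b$ are relatively prime, $c$ and $d$ are relatively prime, and there exist $e,f\in\mathrm{Sqf}\,H$ and $m,n\in\mathbb{N}$ with $e^2\mid a$, $a\mid e^m$, $f^2\mid c$, $c\mid f^n$. If $ab\sim cd$, then $a\sim c$ and $b\sim d$.
   Context: A monoid means a commutative cancellative monoid (written multiplicatively); $H^{\ast}$ is its unit group, $\mathbb{N}=\{1,2,\dots\}$. $x\sim y$ means $x=uy$ with $u\in H^{\ast}$. Elements are relatively prime if all their common divisors are units. $\mathrm{Sqf}\,H$ is the set of elements not of the form $b^2c$ with $b,c\in H$, $b\notin H^{\ast}$. $H$ is a GCD-monoid if any two elements of $H$ have a greatest common divisor. *)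

From Stdlib Require Import Arith.

Record CCMonoid := {
  carrier :> Type;
  mop : carrier -> carrier -> carrier;
  mone : carrier;
  mop_assoc : forall x y z, mop x (mop y z) = mop (mop x y) z;
  mop_comm : forall x y, mop x y = mop y x;
  mop_one : forall x, mop mone x = x;
  mop_cancel : forall x y z, mop x y = mop x z -> y = z
}.

Section Defs.
Variable H : CCMonoid.

Definition is_unit (u : H) : Prop := exists v : H, mop H u v = mone H.

Definition mdvd (a b : H) : Prop := exists c : H, b = mop H a c.

Definition massoc (x y : H) : Prop := exists u : H, is_unit u /\ x = mop H u y.

Definition rel_prime (x y : H) : Prop :=
  forall d : H, mdvd d x -> mdvd d y -> is_unit d.

Definition squarefree (x : H) : Prop :=
  ~ exists b c : H, ~ is_unit b /\ x = mop H (mop H b b) c.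

Definition is_gcd (g x y : H) : Prop :=
  mdvd g x /\ mdvd g y /\ forall d : H, mdvd d x -> mdvd d y -> mdvd d g.

Definition gcd_monoid : Prop := forall x y : H, exists g : H, is_gcd g x y.

Fixpoint mpow (x : H) (n : nat) : H :=
  match n with
  | O => mone H
  | S k => mop H x (mpow x k)
  end.

End Defs.

Arguments is_unit {H} u.
Arguments mdvd {H} a b.
Arguments massoc {H} x y.
Arguments rel_prime {H} x y.
Arguments squarefree {H} x.
Arguments is_gcd {H} g x y.
Arguments mpow {H} x n.

(* Since [e^2 | a | e^m], a common
   divisor [t] of [a] and [d] is coprime to [e]: a common divisor [s] of [t]
   and [e] divides [d], hence is coprime to [c], and [s^2 | a | cd] then forces
   [s^2 | d], so [s] is a unit because [d] is squarefree.  Thus [t] is coprime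
   to [e^m], which it divides, and [a] is coprime to [d]; Euclid's lemma in the
   GCD-monoid turns [a | cd] into [a | c].  Symmetrically [c | a], so [a ~ c],
   and cancelling [a ~ c] from [ab ~ cd] gives [b ~ d]. *)
From Stdlib Require Import Classical.

Section Monoid.
Variable H : CCMonoid.
Implicit Types x y z w u v : H.

Lemma mop_1r x : mop H x (mone H) = x.
Proof. rewrite mop_comm; apply mop_one. Qed.

Lemma mop_CA x y z : mop H x (mop H y z) = mop H y (mop H x z).
Proof. now rewrite !mop_assoc, (mop_comm H x y). Qed.

Lemma mdvd_refl x : mdvd x x.
Proof. exists (mone H); now rewrite mop_1r. Qed.

Lemma mdvd_trans x y z : mdvd x y -> mdvd y z -> mdvd x z.
Proof. intros [k ->] [l ->]; exists (mop H k l); now rewrite mop_assoc. Qed.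

Lemma mdvd_mulr x y z : mdvd x y -> mdvd x (mop H y z).
Proof. intros [k ->]; exists (mop H k z); now rewrite mop_assoc. Qed.

Lemma mdvd_mull x y z : mdvd x y -> mdvd x (mop H z y).
Proof. rewrite mop_comm; apply mdvd_mulr. Qed.

Lemma mdvd_mul x y z w : mdvd x y -> mdvd z w -> mdvd (mop H x z) (mop H y w).
Proof.
  intros [k ->] [l ->]; exists (mop H k l).
  now rewrite <- !mop_assoc, (mop_CA k z l).
Qed.

Lemma mdvd_mul2l x y z : mdvd (mop H z x) (mop H z y) -> mdvd x y.
Proof. intros [k E]; exists k; apply (mop_cancel H z); now rewrite mop_assoc. Qed.

Lemma is_unit_mul u v : is_unit u -> is_unit v -> is_unit (mop H u v).
Proof.
  intros [u' Hu] [v' Hv]; exists (mop H u' v').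
  now rewrite <- mop_assoc, (mop_CA v u' v'), Hv, mop_1r.
Qed.

Lemma is_unit_dvd x u : mdvd x u -> is_unit u -> is_unit x.
Proof. intros [k ->] [w Hw]; exists (mop H k w); now rewrite mop_assoc. Qed.

Lemma mdvd_mul_unitr x y u : is_unit u -> mdvd x (mop H y u) -> mdvd x y.
Proof.
  intros [w Hw] D; apply (mdvd_trans _ _ _ (mdvd_mulr _ _ w D)).
  rewrite <- mop_assoc, Hw, mop_1r; apply mdvd_refl.
Qed.

Lemma massoc_sym x y : massoc x y -> massoc y x.
Proof.
  intros (u & [v Hv] & ->); exists v; split.
  - exists u; now rewrite mop_comm.
  - now rewrite mop_assoc, (mop_comm H v u), Hv, mop_one.
Qed.

Lemma massoc_dvd x y : massoc x y -> mdvd y x.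
Proof. intros (u & _ & ->); exists u; apply mop_comm. Qed.

Lemma massoc_of_dvd x y : mdvd x y -> mdvd y x -> massoc x y.
Proof.
  intros [k ->] [l E]; exists l; split.
  - exists k; apply (mop_cancel H x).
    now rewrite mop_1r, (mop_comm H l k), mop_assoc, <- E.
  - rewrite E at 1; apply mop_comm.
Qed.

Lemma massoc_mul2l x y z w : massoc (mop H x y) (mop H z w) -> massoc x z -> massoc y w.
Proof.
  intros (u & Uu & E) Axz; destruct (massoc_sym _ _ Axz) as (v & Uv & ->).
  exists (mop H u v); split; [now apply is_unit_mul|].
  apply (mop_cancel H x).
  rewrite E, <- !mop_assoc, (mop_CA v x w), (mop_CA u x). reflexivity.
Qed.

Lemma rel_prime_sym x y : rel_prime x y -> rel_prime y x.
Proof. intros R t T1 T2; now apply R. Qed.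

Lemma rel_prime_dvdl x x' y : mdvd x' x -> rel_prime x y -> rel_prime x' y.
Proof. intros D R t T1 T2; apply R; [exact (mdvd_trans _ _ _ T1 D) | exact T2]. Qed.

Lemma rel_prime_unit_of_dvd x y : rel_prime x y -> mdvd x y -> is_unit x.
Proof. intros R D; apply R; [apply mdvd_refl | exact D]. Qed.

Lemma squarefree_unit_of_sq_dvd x s : squarefree x -> mdvd (mop H s s) x -> is_unit s.
Proof.
  intros Sx [k E]; apply NNPP; intros Ns.
  apply Sx; now exists s, k.
Qed.

End Monoid.

Section GcdMonoid.
Variable H : CCMonoid.
Hypothesis HG : gcd_monoid H.
Implicit Types x y z : H.

(* The gcd of [xz] and [yz] is [z] times a common divisor of [x] and [y]. *)
Lemma gauss x y z : rel_prime x y -> mdvd x (mop H y z) -> mdvd x z.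
Proof.
  intros R D.
  destruct (HG (mop H x z) (mop H y z)) as (g & G1 & G2 & G3).
  assert (Zg : mdvd z g) by (apply G3; apply mdvd_mull, mdvd_refl).
  destruct Zg as [h ->].
  assert (Uh : is_unit h).
  { apply R; apply (mdvd_mul2l H _ _ z).
    - now rewrite (mop_comm H z x).
    - now rewrite (mop_comm H z y). }
  apply (mdvd_mul_unitr H _ _ _ Uh), G3; [apply mdvd_mulr, mdvd_refl | exact D].
Qed.

Lemma rel_prime_mull x y z : rel_prime x z -> rel_prime y z -> rel_prime (mop H x y) z.
Proof.
  intros Rx Ry t T1 T2.
  destruct (HG t x) as (g & G1 & G2 & G3).
  assert (Rtx : rel_prime t x).
  { intros s S1 S2; apply (is_unit_dvd H s g); [now apply G3|].
    apply Rx; [exact G2 | exact (mdvd_trans _ _ _ _ G1 T2)]. }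
  apply Ry; [exact (gauss _ _ _ Rtx T1) | exact T2].
Qed.

Lemma rel_prime_powl x z n : rel_prime x z -> rel_prime (mpow x n) z.
Proof.
  intros R; induction n as [|n IH]; simpl.
  - intros t T _; apply (is_unit_dvd H _ _ T); exists (mone H); apply mop_one.
  - now apply rel_prime_mull.
Qed.

Lemma rel_prime_powerful_sqfree a c d e m :
  squarefree d -> rel_prime c d -> mdvd (mop H e e) a -> mdvd a (mpow e m) ->
  mdvd a (mop H c d) -> rel_prime a d.
Proof.
  intros Sd Rcd Ea aE Dacd t Ta Td.
  assert (Rte : rel_prime t e).
  { intros s St Se.
    assert (Sd' : mdvd s d) by exact (mdvd_trans _ _ _ _ St Td).
    assert (Rssc : rel_prime (mop H s s) c).
    { apply rel_prime_mull; apply (rel_prime_dvdl H _ _ _ Sd'), rel_prime_sym; exact Rcd. }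
    assert (SSa : mdvd (mop H s s) (mop H c d)).
    { apply (mdvd_trans _ _ _ _ (mdvd_mul H _ _ _ _ Se Se)).
      exact (mdvd_trans _ _ _ _ Ea Dacd). }
    exact (squarefree_unit_of_sq_dvd H _ _ Sd (gauss _ _ _ Rssc SSa)). }
  apply (rel_prime_unit_of_dvd H _ (mpow e m)); [|exact (mdvd_trans _ _ _ _ Ta aE)].
  now apply rel_prime_sym, rel_prime_powl, rel_prime_sym.
Qed.

Lemma mdvd_powerful_mul_sqfree a c d e m :
  squarefree d -> rel_prime c d -> mdvd (mop H e e) a -> mdvd a (mpow e m) ->
  mdvd a (mop H c d) -> mdvd a c.
Proof.
  intros Sd Rcd Ea aE Dacd.
  apply (gauss a d c); [exact (rel_prime_powerful_sqfree a c d e m Sd Rcd Ea aE Dacd)|].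
  now rewrite mop_comm.
Qed.

End GcdMonoid.

Theorem proposition5p2 (H : CCMonoid) (HG : gcd_monoid H)
  (a b c d : H)
  (Hb : squarefree b) (Hd : squarefree d)
  (Hab : rel_prime a b) (Hcd : rel_prime c d)
  (Hex : exists (e f : H) (m n : nat),
      squarefree e /\ squarefree f /\ 1 <= m /\ 1 <= n /\
      mdvd (mop H e e) a /\ mdvd a (mpow e m) /\
      mdvd (mop H f f) c /\ mdvd c (mpow f n))
  (Hassoc : massoc (mop H a b) (mop H c d)) :
  massoc a c /\ massoc b d.
Proof.
  destruct Hex as (e & f & m & n & _ & _ & _ & _ & Ea & aE & Fc & cF).
  assert (Dacd : mdvd a (mop H c d)).
  { apply (mdvd_trans _ _ (mop H a b)); [apply mdvd_mulr, mdvd_refl|].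
    exact (massoc_dvd _ _ _ (massoc_sym _ _ _ Hassoc)). }
  assert (Dcab : mdvd c (mop H a b)).
  { apply (mdvd_trans _ _ (mop H c d)); [apply mdvd_mulr, mdvd_refl|].
    exact (massoc_dvd _ _ _ Hassoc). }
  assert (Aac : massoc a c).
  { apply massoc_of_dvd.
    - exact (mdvd_powerful_mul_sqfree H HG a c d e m Hd Hcd Ea aE Dacd).
    - exact (mdvd_powerful_mul_sqfree H HG c a b f n Hb Hab Fc cF Dcab). }
  split; [exact Aac | exact (massoc_mul2l _ _ _ _ _ Hassoc Aac)].
Qed.
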